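(* Let $n,r$ be positive integers, let $C\in\mathbb{R}^{n\times n}$ be symmetric, and let $\rho\ge\max\{10\|C\|_{\infty},\,2\|C\|\}$. Let $(\tilde\sigma^k,\sigma^k,y^k)_{k\ge 0}$ be generated by the ADMM-BM algorithm described in the context, and suppose Assumption A holds (i.e. $\gamma_i^k\neq 0$ for every $i\in[n]$ and every iteration $k$). Then the sequence $L_\rho(\tilde\sigma^k,\sigma^k,y^k)$, $k\ge 1$, converges, and $L_\rho(\tilde\sigma^k,\sigma^k,y^k)-\langle C\tilde\sigma^k,\tilde\sigma^k\rangle\to 0$ as $k\to\infty$. Moreover, the sequence $(\tilde\sigma^k)$ has at least one convergent subsequence, and the limit of every convergent subsequence of $(\tilde\sigma^k)$ belongs to the set $\Omega$ of first-order stationary points of the problem $\min\{\langle C,\sigma\sigma^\top\rangle:\sigma\in\mathcal{M}\}$.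
   Context: For $A,B$ of equal size, $\langle A,B\rangle=\mathrm{Tr}(A^\top B)$ and $\|A\|_F=\sqrt{\langle A,A\rangle}$. $\|C\|$ is the spectral (operator 2-) norm and $\|C\|_\infty=\max_i\sum_j|C_{ij}|$. For $\sigma\in\mathbb{R}^{n\times r}$, $\sigma_i\in\mathbb{R}^r$ denotes the (transpose of the) $i$-th row, and $(C\sigma)_{i,\cdot}$ the $i$-th row of $C\sigma$. Let $\mathcal{M}=\{\sigma\in\mathbb{R}^{n\times r}:\|\sigma_i\|=1\ \forall i\in[n]\}$. ADMM-BM algorithm with parameter $\rho>0$: choose $\tilde\sigma^0\in\mathcal{M}$, set $\sigma^0=\tilde\sigma^0$, $y^0=C\tilde\sigma^0$. For $k=0,1,2,\dots$: set $\gamma^k=\sigma^k-\frac1\rho(y^k+C\sigma^k)$ with rows $\gamma^k_i$; set $\tilde\sigma^{k+1}_i=\gamma_i^k/\|\gamma_i^k\|$ for each $i\in[n]$; set $\sigma^{k+1}=\tilde\sigma^{k+1}+\frac1\rho(y^k-C\tilde\sigma^{k+1})$; set $y^{k+1}=y^k+\rho(\tilde\sigma^{k+1}-\sigma^{k+1})$. Assumption A: $\|\gamma_i^k\|\neq0$ for all $i\in[n]$ and all $k$. Augmented Lagrangian: $L_\rho(\tilde\sigma,\sigma,y)=\langle C,\tilde\sigma\sigma^\top\rangle+\langle y,\tilde\sigma-\sigma\rangle+\frac\rho2\|\tilde\sigma-\sigma\|_F^2+\sum_{i=1}^n\mathcal{I}_{\{\|u\|=1\}}(\tilde\sigma_i)$,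 where $\mathcal{I}_S$ is the indicator function of $S$ (0 on $S$, $+\infty$ outside). A first-order stationary point is a $\tilde\sigma^*\in\mathcal{M}$ such that $-(C\tilde\sigma^* )_{i,\cdot}^\top\in\partial\mathcal{I}_{\{\|u\|=1\}}(\tilde\sigma^*_i)$ for all $i\in[n]$, where $\partial$ is the limiting subdifferential (for the unit sphere at a point $u$ this is $\{tu:t\in\mathbb{R}\}$). *)

From HB Require Import structures.
From mathcomp Require Import all_boot all_order all_algebra.
From mathcomp Require Import all_classical all_reals all_analysis.
Set Implicit Arguments. Unset Strict Implicit. Unset Printing Implicit Defensive.
Import Order.TTheory GRing.Theory Num.Theory.
Import numFieldNormedType.Exports.
Local Open Scope ring_scope.
Local Open Scope classical_set_scope.

Section Defs.
Variable R : realType.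

Definition frob {m p : nat} (A B : 'M[R]_(m, p)) : R := \tr (A^T *m B).

Definition rnorm {p : nat} (v : 'rV[R]_p) : R := Num.sqrt (\sum_j (v 0 j) ^+ 2).
Definition cnorm {p : nat} (v : 'cV[R]_p) : R := Num.sqrt (\sum_i (v i 0) ^+ 2).

Definition spec_norm {n : nat} (C : 'M[R]_n) : R :=
  sup [set cnorm (C *m x) | x in [set x : 'cV[R]_n | cnorm x = 1]].

Definition inf_norm {n : nat} (C : 'M[R]_n) : R :=
  \big[Num.max/0]_(i < n) \sum_(j < n) `|C i j|.

Definition oblique {n r : nat} (s : 'M[R]_(n, r)) : Prop :=
  forall i : 'I_n, rnorm (row i s) = 1.

Definition sphere_ind {r : nat} (u : 'rV[R]_r) : \bar R :=
  if rnorm u == 1 then 0%E else +oo%E.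

Definition Lrho {n r : nat} (C : 'M[R]_n) (rho : R)
    (ts s y : 'M[R]_(n, r)) : \bar R :=
  ((frob C (ts *m s^T) + frob y (ts - s) + rho / 2 * frob (ts - s) (ts - s))%:E
   + \sum_(i < n) sphere_ind (row i ts))%E.

Definition sphere_subdiff {r : nat} (u : 'rV[R]_r) : set 'rV[R]_r :=
  [set v | exists t : R, v = t *: u].

Definition stationary {n r : nat} (C : 'M[R]_n) (ts : 'M[R]_(n, r)) : Prop :=
  oblique ts /\
  forall i : 'I_n, sphere_subdiff (row i ts) (- row i (C *m ts)).

Definition gammaBM {n r : nat} (C : 'M[R]_n) (rho : R)
    (s y : 'M[R]_(n, r)) : 'M[R]_(n, r) :=
  s - rho^-1 *: (y + C *m s).

Definition admm_bm {n r : nat} (C : 'M[R]_n) (rho : R)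
    (ts s y : nat -> 'M[R]_(n, r)) : Prop :=
  [/\ oblique (ts 0%N), s 0%N = ts 0%N, y 0%N = C *m ts 0%N &
   forall k : nat,
     [/\ ts k.+1 = \matrix_(i, j)
            (gammaBM C rho (s k) (y k) i j / rnorm (row i (gammaBM C rho (s k) (y k)))),
         s k.+1 = ts k.+1 + rho^-1 *: (y k - C *m ts k.+1) &
         y k.+1 = y k + rho *: (ts k.+1 - s k.+1)]].

Definition assumptionA {n r : nat} (C : 'M[R]_n) (rho : R)
    (s y : nat -> 'M[R]_(n, r)) : Prop :=
  forall (k : nat) (i : 'I_n), rnorm (row i (gammaBM C rho (s k) (y k))) != 0.

End Defs.

From HB Require Import structures.
From mathcomp Require Import all_boot all_order all_algebra.
From mathcomp Require Import all_classical all_reals all_analysis.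
From mathcomp Require Import ring lra.
Import Order.TTheory GRing.Theory Num.Theory.
Import numFieldNormedType.Exports.
Set Implicit Arguments. Unset Strict Implicit. Unset Printing Implicit Defensive.
Local Open Scope ring_scope.
Local Open Scope classical_set_scope.

(* The dual update keeps y^k = C ts^k, so with the residual res^k := s^k - ts^k
   the augmented Lagrangian equals <C ts^k, ts^k> + rho/2 |res^k|^2, and
   res^{k+1} = - rho^-1 C (ts^{k+1} - ts^k).  When rho >= 10 |C|_oo every row of
   gamma^k has norm at least 1/2, and normalising these rows gives the sufficient
   decrease L_{k+1} + rho/30 |ts^{k+1} - ts^k|^2 <= L_k.  As L is bounded below it
   converges, and both ts^{k+1} - ts^k and res^k tend to 0.  Along a subsequence
   with ts^k -> L we get gamma^k -> L - 2 rho^-1 C L, and passing to the limit in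
   gamma^k_i = <gamma^k_i, ts^{k+1}_i> ts^{k+1}_i shows that row i of C L is a
   multiple of row i of L.  Bolzano-Weierstrass on the bounded entries of ts^k
   provides convergent subsequences. *)

Section Frobenius.
Variables (R : realType) (m p : nat).
Implicit Types (A B D : 'M[R]_(m, p)) (t : R).

Lemma frobE A B : frob A B = \sum_i \sum_j A i j * B i j.
Proof.
rewrite /frob /mxtrace exchange_big /=; apply: eq_bigr => j _.
by rewrite !mxE; apply: eq_bigr => i _; rewrite !mxE.
Qed.

Lemma frobC A B : frob A B = frob B A.
Proof. by rewrite !frobE; apply: eq_bigr => i _; apply: eq_bigr => j _; rewrite mulrC. Qed.

Lemma frobDl A B D : frob (A + B) D = frob A D + frob B D.
Proof. by rewrite /frob linearD mulmxDl mxtraceD. Qed.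

Lemma frobZl a A B : frob (a *: A) B = a * frob A B.
Proof. by rewrite /frob linearZ -scalemxAl mxtraceZ. Qed.

Lemma frobNl A B : frob (- A) B = - frob A B.
Proof. by rewrite -scaleN1r frobZl mulN1r. Qed.

Lemma frobBl A B D : frob (A - B) D = frob A D - frob B D.
Proof. by rewrite frobDl frobNl. Qed.

Lemma frobDr A B D : frob D (A + B) = frob D A + frob D B.
Proof. by rewrite frobC frobDl !(frobC D). Qed.

Lemma frobZr a A B : frob A (a *: B) = a * frob A B.
Proof. by rewrite frobC frobZl frobC. Qed.

Lemma frobNr A B : frob A (- B) = - frob A B.
Proof. by rewrite frobC frobNl frobC. Qed.

Lemma frobBr A B D : frob D (A - B) = frob D A - frob D B.
Proof. by rewrite frobDr frobNr. Qed.

Lemma frob0l B : frob 0 B = 0.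
Proof. by rewrite -(scale0r 0) frobZl mul0r. Qed.

Lemma frob_ge0 A : 0 <= frob A A.
Proof. by rewrite frobE; do 2!apply: sumr_ge0 => ? _; rewrite -expr2 sqr_ge0. Qed.

Lemma frob_young t A B : 0 < t -> 2 * frob A B <= t * frob A A + t^-1 * frob B B.
Proof.
move=> t_gt0; have : 0 <= t^-1 * frob (t *: A - B) (t *: A - B).
  by rewrite mulr_ge0 ?frob_ge0 // invr_ge0 ltW.
rewrite frobBl !frobBr !frobZl !frobZr (frobC B).
have -> : t^-1 * (t * (t * frob A A) - t * frob A B - (t * frob A B - frob B B)) =
  t * frob A A + t^-1 * frob B B - 2 * frob A B by field; exact: lt0r_neq0.
by rewrite subr_ge0.
Qed.

Lemma frob_normD_le t A B : 0 < t ->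
  frob (A + B) (A + B) <= (1 + t) * frob A A + (1 + t^-1) * frob B B.
Proof.
move=> t_gt0; have := frob_young A B t_gt0.
rewrite frobDl !frobDr (frobC B A); lra.
Qed.

Lemma frob_normD_ge t A B : 0 < t ->
  (1 - t) * frob A A + (1 - t^-1) * frob B B <= frob (A + B) (A + B).
Proof.
move=> t_gt0; have := frob_young A (- B) t_gt0.
rewrite frobDl !frobDr (frobC B A) frobNr frobNl frobNr opprK; lra.
Qed.

Lemma sqr_entry_le_frob A i j : A i j ^+ 2 <= frob A A.
Proof.
rewrite frobE (bigD1 i) //= (bigD1 j) //= -expr2 -addrA lerDl.
by apply: addr_ge0; apply: sumr_ge0 => *; [|apply: sumr_ge0 => *]; rewrite -expr2 sqr_ge0.
Qed.

End Frobenius.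

Lemma frob_row (R : realType) m p (A B : 'M[R]_(m, p)) i :
  frob (row i A) (row i B) = \sum_j A i j * B i j.
Proof. by rewrite frobE big_ord1; apply: eq_bigr => j _; rewrite !mxE. Qed.

Lemma frob_sum_row (R : realType) m p (A B : 'M[R]_(m, p)) :
  frob A B = \sum_i frob (row i A) (row i B).
Proof. by rewrite frobE; apply: eq_bigr => i _; rewrite frob_row. Qed.

Lemma rnormE (R : realType) p (v : 'rV[R]_p) : rnorm v = Num.sqrt (frob v v).
Proof. by rewrite frobE big_ord1 /rnorm; congr Num.sqrt; apply: eq_bigr => j _; rewrite expr2. Qed.

Lemma sqr_wsum_le (R : realType) k (a x : 'I_k -> R) :
  (\sum_j a j * x j) ^+ 2 <= (\sum_j `|a j|) * \sum_j `|a j| * x j ^+ 2.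
Proof.
have cross j l : 2 * (a j * x j * (a l * x l)) <=
    `|a j| * x j ^+ 2 * `|a l| + `|a j| * (`|a l| * x l ^+ 2).
  have [+ _] := leif_mean_square_scaled `|x j| `|x l|.
  rewrite !real_normK ?num_real //.
  have := ler_norm (a j * x j * (a l * x l)); rewrite !normrM.
  have := mulr_ge0 (normr_ge0 (a j)) (normr_ge0 (a l)); nra.
have : 2 * (\sum_j a j * x j) ^+ 2 <= \sum_j \sum_l
    (`|a j| * x j ^+ 2 * `|a l| + `|a j| * (`|a l| * x l ^+ 2)).
  rewrite expr2 big_distrlr mulr_sumr; apply: ler_sum => j _.
  by rewrite mulr_sumr; apply: ler_sum => l _; exact: cross.
under [X in _ <= X -> _]eq_bigr do rewrite big_split.
rewrite big_split /= -!big_distrlr /= mulrC; lra.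
Qed.

Section InfNorm.
Variables (R : realType) (n : nat) (C : 'M[R]_n).
Local Notation c := (inf_norm C).

Lemma inf_norm_ge0 : 0 <= c.
Proof. by apply: bigmax_ge_id. Qed.

Lemma abs_rowsum_le i : \sum_j `|C i j| <= c.
Proof. exact: (le_bigmax 0 (fun i => \sum_j `|C i j|) i). Qed.

Lemma inf_norm_eq0 : c = 0 -> C = 0.
Proof.
move=> c0; apply/matrixP => i j; rewrite mxE; apply/normr0_eq0/le_anti.
rewrite normr_ge0 andbT -c0 (le_trans _ (abs_rowsum_le i)) //.
by rewrite (bigD1 j) //= lerDl sumr_ge0.
Qed.

Lemma frob_row_mulmx_le p (X : 'M[R]_(n, p)) i :
  frob (row i (C *m X)) (row i (C *m X)) <=
  (\sum_j `|C i j|) * \sum_j `|C i j| * frob (row j X) (row j X).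
Proof.
under [X in _ <= _ * X]eq_bigr do rewrite frob_row mulr_sumr.
rewrite exchange_big mulr_sumr frob_row; apply: ler_sum => l _.
by rewrite -expr2 mxE; under [X in _ <= _ * X]eq_bigr do rewrite -expr2; exact: sqr_wsum_le.
Qed.

Lemma row_mulmx_bound p (X : 'M[R]_(n, p)) M : 0 <= M ->
  (forall j, frob (row j X) (row j X) <= M) ->
  forall i, frob (row i (C *m X)) (row i (C *m X)) <= c ^+ 2 * M.
Proof.
move=> M_ge0 XM i; apply: le_trans (frob_row_mulmx_le X i) _.
have ri_ge0 : 0 <= \sum_j `|C i j| by rewrite sumr_ge0.
apply: le_trans (_ : (\sum_j `|C i j|) * ((\sum_j `|C i j|) * M) <= _).
  by rewrite ler_wpM2l // mulr_suml ler_sum // => j _; rewrite ler_wpM2l.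
by rewrite mulrA -expr2 ler_wpM2r // lerXn2r ?nnegrE ?abs_rowsum_le ?inf_norm_ge0.
Qed.

Lemma frob_mul_trmx p (A B : 'M[R]_(n, p)) : frob C (A *m B^T) = frob (C *m B) A.
Proof. by rewrite /frob mulmxA mxtrace_mulC trmx_mul mulmxA. Qed.

Hypothesis C_sym : C^T = C.

Lemma frob_mulmxC p (A B : 'M[R]_(n, p)) : frob (C *m A) B = frob A (C *m B).
Proof. by rewrite /frob trmx_mul C_sym mulmxA. Qed.

Lemma frob_mulmx_le p (X : 'M[R]_(n, p)) : frob (C *m X) (C *m X) <= c ^+ 2 * frob X X.
Proof.
rewrite [X in _ <= _ * X]frob_sum_row frob_sum_row.
apply: le_trans (ler_sum _ (fun i _ => frob_row_mulmx_le X i)) _.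
apply: le_trans (_ : \sum_i c * \sum_j `|C i j| * frob (row j X) (row j X) <= _).
  apply: ler_sum => i _; rewrite ler_wpM2r ?abs_rowsum_le //.
  by rewrite sumr_ge0 // => j _; rewrite mulr_ge0 ?frob_ge0.
rewrite -mulr_sumr exchange_big expr2 -mulrA ler_wpM2l ?inf_norm_ge0 // mulr_sumr.
apply: ler_sum => j _; rewrite -mulr_suml ler_wpM2r ?frob_ge0 //.
have C_symE i : C i j = C j i by rewrite -{1}C_sym mxE.
by under eq_bigr do rewrite C_symE; exact: abs_rowsum_le.
Qed.

Lemma frob_mulmx_young p t (X Y : 'M[R]_(n, p)) : 0 < t -> c <= t ->
  2 * frob (C *m X) Y <= t * (frob X X + frob Y Y).
Proof.
move=> t_gt0 ct; have ti_gt0 : 0 < t^-1 by rewrite invr_gt0.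
apply: le_trans (frob_young (C *m X) Y ti_gt0) _.
rewrite invrK mulrDr lerD2r ler_pdivrMl // mulrA -expr2.
apply: le_trans (frob_mulmx_le X) _; rewrite ler_wpM2r ?frob_ge0 //.
by rewrite lerXn2r ?nnegrE ?inf_norm_ge0 // ltW.
Qed.

End InfNorm.

Lemma homo_ltn_infl (phi : nat -> nat) :
  {homo phi : a b / (a < b)%N} -> forall k, (k <= phi k)%N.
Proof. by move=> phi_incr; elim=> // k /leq_ltn_trans; apply; exact: phi_incr. Qed.

Lemma cvg_subseq {T : topologicalType} (u : nat -> T) (l : T) (phi : nat -> nat) :
  {homo phi : a b / (a < b)%N} -> u @ \oo --> l -> (u \o phi) @ \oo --> l.
Proof.
move=> phi_incr ul; apply: cvg_comp ul; apply/cvgnyPge => N; near=> k.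
by apply: leq_trans (homo_ltn_infl phi_incr k); near: k; exact: nbhs_infty_ge.
Unshelve. all: by end_near.
Qed.

Lemma increasing_seq_homo (f : nat -> nat) :
  increasing_seq f -> {homo f : a b / (a < b)%N}.
Proof. by move=> f_incr a b; rewrite (leqW_mono f_incr). Qed.

Section SufficientDecrease.
Variables (R : realType) (u d : R ^nat) (a : R).
Hypotheses (a_gt0 : 0 < a) (d_ge0 : forall k, 0 <= d k).
Hypothesis u_decrease : forall k, u k.+1 + a * d k <= u k.
Hypothesis u_lbound : has_lbound (range u).

Lemma decrease_cvgn : cvgn u.
Proof.
apply: nonincreasing_is_cvgn u_lbound; apply/nonincreasing_seqP => k.
have := u_decrease k; have := mulr_ge0 (ltW a_gt0) (d_ge0 k); lra.
Qed.

Lemma decrease_gap_cvg0 : d @ \oo --> 0.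
Proof.
have : (fun k => (u k - u k.+1) / a) @ \oo --> (limn u - limn u) / a.
  by apply: cvgM _ (cvg_cst _); apply: cvgB; [|rewrite (cvg_shiftS u)]; exact: decrease_cvgn.
rewrite subrr mul0r; apply: (squeeze_cvgr _ (cvg_cst 0)); near=> k.
by rewrite d_ge0 /= ler_pdivlMr // mulrC; have := u_decrease k; lra.
Unshelve. all: by end_near.
Qed.

End SufficientDecrease.

Lemma sqr_cvg0 (R : realType) (u w : R ^nat) :
  (forall k, u k ^+ 2 <= w k) -> w @ \oo --> 0 -> u @ \oo --> 0.
Proof.
move=> uw /cvgrPdist_lt w0; apply/cvgrPdist_lt => e e_gt0.
move: (w0 (e ^+ 2) (exprn_gt0 2 e_gt0)); apply: filterS => k.
rewrite !sub0r !normrN => /(le_lt_trans (le_trans (uw k) (ler_norm _))).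
rewrite -real_normK ?num_real //; have := normr_ge0 (u k); nra.
Qed.

Section MatrixSequences.
Variable R : realType.

Lemma cvg_mx_entry m p (X : nat -> 'M[R]_(m, p)) (L : 'M[R]_(m, p)) i j :
  X @ \oo --> L -> (fun k => X k i j) @ \oo --> L i j.
Proof. exact: continuous_cvg (@coord_continuous R m p i j L). Qed.

Lemma cvg_mx_entrywise m p (X : nat -> 'M[R]_(m, p)) (L : 'M[R]_(m, p)) :
  (forall i j, (fun k => X k i j) @ \oo --> L i j) -> X @ \oo --> L.
Proof.
move=> XL; apply/cvg_mx_entourageP => A entA.
have XF : Filter (X @ \oo) by exact: fmap_filter.
apply: (filter_forall (f := fun i (M : 'M[R]_(m, p)) => forall j, (L i j, M i j) \in A) XF) => i.
apply: (filter_forall (f := fun j (M : 'M[R]_(m, p)) => (L i j, M i j) \in A) XF) => j.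
have : \forall k \near \oo, A (L i j, X k i j) by move/cvg_entourageP: (XL i j); apply.
by apply: filterS => k; rewrite /= inE.
Qed.

Lemma cvg_mulmx m n p (A : nat -> 'M[R]_(m, n)) (B : nat -> 'M[R]_(n, p))
    (a : 'M[R]_(m, n)) (b : 'M[R]_(n, p)) :
  A @ \oo --> a -> B @ \oo --> b -> (fun k => A k *m B k) @ \oo --> a *m b.
Proof.
move=> Aa Bb; apply: cvg_mx_entrywise => i j; rewrite mxE.
under eq_cvg do rewrite mxE.
apply: cvg_big => [|l _]; first exact: add_continuous.
by apply: cvgM; exact: cvg_mx_entry.
Qed.

Lemma cvg_row m p (X : nat -> 'M[R]_(m, p)) (L : 'M[R]_(m, p)) i :
  X @ \oo --> L -> (fun k => row i (X k)) @ \oo --> row i L.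
Proof. by move=> XL; rewrite rowE; under eq_cvg do rewrite rowE; exact: cvg_mulmx (cvg_cst _) XL. Qed.

Lemma cvg_frob m p (A B : nat -> 'M[R]_(m, p)) (a b : 'M[R]_(m, p)) :
  A @ \oo --> a -> B @ \oo --> b -> (fun k => frob (A k) (B k)) @ \oo --> frob a b.
Proof.
move=> Aa Bb; rewrite frobE; under eq_cvg do rewrite frobE.
apply: cvg_big => [|i _]; first exact: add_continuous.
apply: cvg_big => [|j _]; first exact: add_continuous.
by apply: cvgM; exact: cvg_mx_entry.
Qed.

Lemma frob_norm_cvg0 m p (X : nat -> 'M[R]_(m, p)) :
  (fun k => frob (X k) (X k)) @ \oo --> 0 -> X @ \oo --> (0 : 'M[R]_(m, p)).
Proof.
move=> X0; apply: cvg_mx_entrywise => i j; rewrite mxE.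
by apply: sqr_cvg0 X0 => k; exact: sqr_entry_le_frob.
Qed.

Lemma mx_bolzano_weierstrass m p (X : nat -> 'M[R]_(m, p)) (M : R) :
  (forall k i j, `|X k i j| <= M) ->
  exists phi : nat -> nat, {homo phi : a b / (a < b)%N} /\ cvg ((X \o phi) @ \oo).
Proof.
move=> XM.
have entries_cvg (s : seq ('I_m * 'I_p)) : exists phi : nat -> nat,
    {homo phi : a b / (a < b)%N} /\
    forall ij, ij \in s -> cvgn (fun k => X (phi k) ij.1 ij.2).
  elim: s => [|ij s [phi [phi_incr IH]]]; first by exists id; split.
  have Xij_bounded : bounded_fun (fun k => X (phi k) ij.1 ij.2).
    rewrite /= /bounded_near; near=> N => k _ /=.
    by apply: le_trans (XM _ _ _) _; near: N; apply: nbhs_pinfty_ge; exact: num_real.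
  have [psi /increasing_seq_homo psi_incr Xpsi] := bolzano_weierstrass Xij_bounded.
  exists (phi \o psi); split => [a b ab|ij']; first by apply/phi_incr/psi_incr.
  rewrite in_cons => /predU1P[-> //|/IH Xij'].
  exact: cvgP (cvg_subseq psi_incr Xij').
have [phi [phi_incr phi_cvg]] := entries_cvg (enum [set: 'I_m * 'I_p]).
exists phi; split => //; apply/cvg_ex.
exists (\matrix_(i, j) limn (fun k => X (phi k) i j)).
by apply: cvg_mx_entrywise => i j; rewrite mxE; apply: (phi_cvg (i, j)); rewrite mem_enum inE.
Unshelve. all: by end_near.
Qed.

End MatrixSequences.

Lemma obliqueP (R : realType) m p (A : 'M[R]_(m, p)) :
  oblique A <-> forall i, frob (row i A) (row i A) = 1.
Proof.
split=> A1 i; last by rewrite rnormE A1 sqrtr1.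
by rewrite -[LHS]sqr_sqrtr ?frob_ge0 // -rnormE A1 expr1n.
Qed.

Lemma frob_unit_sub (R : realType) p (u v : 'rV[R]_p) :
  frob u u = 1 -> frob v v = 1 -> frob v (v - u) = frob (v - u) (v - u) / 2.
Proof. by move=> u1 v1; rewrite !frobBl !frobBr u1 v1 (frobC u v); lra. Qed.

Section ADMM.
Variables (R : realType) (n r : nat) (C : 'M[R]_n) (rho : R).
Variables ts s y : nat -> 'M[R]_(n, r).
Hypothesis C_sym : C^T = C.
Hypothesis rho_ge : 10 * inf_norm C <= rho.
Hypothesis admm : admm_bm C rho ts s y.
Hypothesis gamma_neq0 : assumptionA C rho s y.

Local Notation c := (inf_norm C).
Local Notation gam k := (gammaBM C rho (s k) (y k)).

Definition step k := ts k.+1 - ts k.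
Definition res k := s k - ts k.
Definition lagr k := frob (C *m ts k) (ts k) + rho / 2 * frob (res k) (res k).

Lemma rho_ge0 : 0 <= rho.
Proof. by apply: le_trans rho_ge; rewrite mulr_ge0 ?inf_norm_ge0. Qed.

(* Here MathComp's 0^-1 = 0 keeps the iteration defined, and C = 0 makes it trivial. *)
Lemma rho_le0_degenerate : rho <= 0 -> rho = 0 /\ C = 0.
Proof.
move=> rho_le0; have rho0 : rho = 0 by apply/le_anti; rewrite rho_le0 rho_ge0.
split=> //; apply: inf_norm_eq0; apply/le_anti; rewrite inf_norm_ge0 andbT.
by have := rho_ge; rewrite rho0; lra.
Qed.

Lemma row_gam k i : row i (gam k) = rnorm (row i (gam k)) *: row i (ts k.+1).
Proof.
have [_ _ _ /(_ k) [-> _ _]] := admm; apply/rowP => j.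
by rewrite !mxE [RHS]mulrC divfK ?gamma_neq0.
Qed.

Lemma frob_row_ts k i : frob (row i (ts k)) (row i (ts k)) = 1.
Proof.
case: k => [|k]; first by have [/obliqueP] := admm.
set N := rnorm (row i (gam k)); have N2_neq0 : N ^+ 2 != 0 by rewrite expf_neq0 ?gamma_neq0.
have : N ^+ 2 = frob (row i (gam k)) (row i (gam k)) by rewrite /N rnormE sqr_sqrtr ?frob_ge0.
rewrite row_gam -/N frobZl frobZr mulrA -expr2 -{1}[N ^+ 2]mulr1 => /mulfI -> //.
Qed.

Lemma ts_oblique k : oblique (ts k).
Proof. exact/obliqueP/frob_row_ts. Qed.

Lemma yE k : y k = C *m ts k.
Proof.
elim: k => [|k IH]; first by have [] := admm.
have [_ _ _ /(_ k) [_ -> ->]] := admm; rewrite IH.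
have [rho_gt0|/rho_le0_degenerate [rho0 C0]] := ltrP 0 rho.
  by rewrite opprD addNKr scalerN scalerA mulfV ?gt_eqF // scale1r opprB addrC subrK.
by rewrite rho0 C0 !mul0mx scale0r addr0.
Qed.

Lemma res0 : res 0 = 0.
Proof. by have [_ s0 _ _] := admm; rewrite /res s0 subrr. Qed.

Lemma resS k : res k.+1 = - (rho^-1 *: (C *m step k)).
Proof.
rewrite /res /step; have [_ _ _ /(_ k) [_ -> _]] := admm.
by rewrite addrAC subrr add0r yE mulmxBr -scalerN opprB.
Qed.

Lemma gamE k : gam k = ts k + res k - rho^-1 *: (C *m (2%:R *: ts k + res k)).
Proof.
rewrite /gammaBM yE /res addrCA subrr addr0 -mulmxDr.
by congr (_ - _ *: (C *m _)); rewrite scaler_nat mulr2n -addrA [ts k + (s k - ts k)]addrC subrK.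
Qed.

Lemma LrhoE k : Lrho C rho (ts k) (s k) (y k) = (lagr k)%:E.
Proof.
rewrite /Lrho big1 ?adde0 => [|i _]; last by rewrite /sphere_ind ts_oblique eqxx.
rewrite frob_mul_trmx yE -[ts k - s k]opprB -/(res k) frobNr frobNl frobNr opprK.
have -> : s k = ts k + res k by rewrite /res addrC subrK.
rewrite mulmxDr frobDl [frob (C *m res k) _]frob_mulmxC // (frobC (res k)) /lagr.
by congr (_%:E); ring.
Qed.

Lemma frob_ts k : frob (ts k) (ts k) = n%:R.
Proof. by rewrite frob_sum_row (eq_bigr _ (fun i _ => frob_row_ts k i)) sumr_const card_ord. Qed.

Lemma ts_entry_bound k i j : `|ts k i j| <= 1.
Proof.
have := sqr_entry_le_frob (row i (ts k)) 0 j; rewrite frob_row_ts mxE -real_normK ?num_real //.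
by have := normr_ge0 (ts k i j); nra.
Qed.

Lemma lagr_lbound k : - ((c + 1) * n%:R) <= lagr k.
Proof.
have c1_gt0 : 0 < c + 1 by rewrite ltr_pwDr ?inf_norm_ge0.
have := frob_mulmx_young C_sym (ts k) (- ts k) c1_gt0 (ler_wpDr ler01 (lexx c)).
rewrite frobNr frobNl frobNr opprK frob_ts /lagr.
have : 0 <= rho / 2 * frob (res k) (res k) by rewrite mulr_ge0 ?frob_ge0 ?divr_ge0 ?rho_ge0.
lra.
Qed.

Lemma lagr_bounded_below : has_lbound (range lagr).
Proof. by exists (- ((c + 1) * n%:R)) => _ [k _ <-]; exact: lagr_lbound. Qed.

Section PositivePenalty.
Hypothesis rho_gt0 : 0 < rho.

Lemma inf_norm_div_rho : 0 <= rho^-1 * c <= 1/10.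
Proof.
have c_le : c <= rho / 10 by have := rho_ge; lra.
have rhoV_ge0 : 0 <= rho^-1 by rewrite invr_ge0 rho_ge0.
rewrite mulr_ge0 ?inf_norm_ge0 //=.
by apply: le_trans (ler_wpM2l rhoV_ge0 c_le) _; rewrite mulrA mulVf ?gt_eqF.
Qed.

Lemma row_scaled_mulmx_le (X : 'M[R]_(n, r)) M : 0 <= M ->
  (forall j, frob (row j X) (row j X) <= M) ->
  forall i, frob (row i (rho^-1 *: (C *m X))) (row i (rho^-1 *: (C *m X))) <= M / 100.
Proof.
move=> M_ge0 XM i; rewrite linearZ /= frobZl frobZr mulrA -expr2.
apply: le_trans (ler_wpM2l (sqr_ge0 _) (row_mulmx_bound C M_ge0 XM i)) _.
have /andP[x_ge0 x_le] := inf_norm_div_rho.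
have : (rho^-1 * c) ^+ 2 <= 1 / 100 by nra.
by rewrite exprMn mulrA; nra.
Qed.

Lemma frob_row_step_le k j : frob (row j (step k)) (row j (step k)) <= 4.
Proof.
have := frob_normD_le (row j (ts k.+1)) (- row j (ts k)) ltr01.
by rewrite /step linearB /= frobNl frobNr opprK !frob_row_ts invr1; lra.
Qed.

Lemma frob_row_res_le k i : frob (row i (res k)) (row i (res k)) <= 1 / 25.
Proof.
case: k => [|k]; first by rewrite res0 row0 frob0l.
rewrite resS linearN /= frobNl frobNr opprK.
apply: le_trans (row_scaled_mulmx_le _ (frob_row_step_le k) i) _ => //; lra.
Qed.

(* |res_i|^2 <= 1/25 and |ts_i| = 1 give |gamma_i| >= 1 - 1/5 - 11/50 > 1/2; the
   squared triangle inequalities below are the quantitative form of this. *)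
Lemma rnorm_row_gam_ge k i : 1 / 2 <= rnorm (row i (gam k)).
Proof.
pose V := rho^-1 *: (C *m (2%:R *: ts k + res k)).
have Z_le j : frob (row j (2%:R *: ts k + res k)) (row j (2%:R *: ts k + res k)) <= 121 / 25.
  have t_gt0 : 0 < 1 / 10 :> R by lra.
  have := frob_normD_le (row j (2%:R *: ts k)) (row j (res k)) t_gt0.
  rewrite -linearD /= linearZ /= frobZl frobZr frob_row_ts invf_div.
  by have := frob_row_res_le k j; lra.
have V_le : frob (row i V) (row i V) <= 121 / 2500.
  by apply: le_trans (row_scaled_mulmx_le _ Z_le i) _; lra.
have resV_le : frob (row i (res k - V)) (row i (res k - V)) <= 442 / 2500.
  have := frob_normD_le (row i (res k)) (- row i V) ltr01.
  rewrite frobNl frobNr opprK -linearN -linearD /= invr1.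
  by have := frob_row_res_le k i; lra.
have gam_ge : 1 / 4 <= frob (row i (gam k)) (row i (gam k)).
  have t_gt0 : 0 < 1 / 2 :> R by lra.
  have := frob_normD_ge (row i (ts k)) (row i (res k - V)) t_gt0.
  by rewrite -linearD /= frob_row_ts invf_div addrA -gamE; lra.
rewrite rnormE; have := sqrtr_ge0 (frob (row i (gam k)) (row i (gam k))).
by move: gam_ge; rewrite -[X in _ <= X]sqr_sqrtr ?frob_ge0 //; nra.
Qed.

Lemma frob_ts_stepE k : frob (ts k) (step k) = - (frob (step k) (step k) / 2).
Proof.
rewrite [frob (ts k) _]frob_sum_row [frob (step k) _]frob_sum_row mulr_suml -sumrN.
apply: eq_bigr => i _.
rewrite /step linearB /= -[row i (ts k.+1) - _]opprB frobNr frobNl frobNr opprK.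
by rewrite frob_unit_sub ?frob_row_ts.
Qed.

Lemma frob_gam_step_ge k : frob (step k) (step k) / 4 <= frob (gam k) (step k).
Proof.
rewrite [frob (gam k) _]frob_sum_row [frob (step k) _]frob_sum_row mulr_suml.
apply: ler_sum => i _.
rewrite row_gam frobZl /step linearB /= frob_unit_sub ?frob_row_ts //.
by have := rnorm_row_gam_ge k i; have := frob_ge0 (row i (ts k.+1) - row i (ts k)); nra.
Qed.

Lemma lagrS k : lagr k.+1 = lagr k - rho / 2 * frob (res k) (res k)
  + 2 * frob (C *m ts k) (step k) + frob (C *m step k) (step k)
  + frob (C *m step k) (C *m step k) / (2 * rho).
Proof.
rewrite /lagr resS frobNl frobNr opprK frobZl frobZr.
have -> : ts k.+1 = ts k + step k by rewrite /step addrC subrK.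
rewrite mulmxDr frobDl !(frobDr (ts k) (step k)) [frob (C *m step k) (ts k)]frob_mulmxC //.
by rewrite [frob (step k) _]frobC; field; rewrite gt_eqF.
Qed.

Lemma frob_gam_stepE k : rho * frob (gam k) (step k) =
  rho * frob (ts k) (step k) + rho * frob (res k) (step k)
  - 2 * frob (C *m ts k) (step k) - frob (C *m res k) (step k).
Proof.
rewrite gamE frobBl (frobDl (ts k) (res k)) frobZl mulmxDr.
rewrite (frobDl (C *m (2%:R *: ts k))) -scalemxAr frobZl.
by field; rewrite gt_eqF.
Qed.

Lemma lagr_descent k : lagr k.+1 + rho / 30 * frob (step k) (step k) <= lagr k.
Proof.
have t_gt0 : 0 < rho / 10 by rewrite divr_gt0.
have ct : c <= rho / 10 by have := rho_ge; lra.
have CresD := frob_mulmx_young C_sym (res k) (- step k) t_gt0 ct.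
rewrite frobNr frobNl frobNr opprK in CresD.
have CDD := frob_mulmx_young C_sym (step k) (step k) t_gt0 ct.
have CD2 : frob (C *m step k) (C *m step k) / (2 * rho) <= rho / 200 * frob (step k) (step k).
  rewrite ler_pdivrMr ?mulr_gt0 //; apply: le_trans (frob_mulmx_le C_sym _) _.
  have -> : rho / 200 * frob (step k) (step k) * (2 * rho) =
    (rho / 10) ^+ 2 * frob (step k) (step k) by field.
  by rewrite ler_wpM2r ?frob_ge0 // lerXn2r ?nnegrE ?inf_norm_ge0 ?divr_ge0 ?rho_ge0.
(* The Young weight 9/10 makes the |res k|^2 terms cancel exactly. *)
have resD : rho * (2 * frob (res k) (step k)) <=
    rho * (9 / 10 * frob (res k) (res k) + 10 / 9 * frob (step k) (step k)).
  have t'_gt0 : 0 < 9 / 10 :> R by lra.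
  by rewrite ler_wpM2l ?rho_ge0 // -[10 / 9](invf_div 9 10) frob_young.
have gamD : rho * (frob (step k) (step k) / 4) <= rho * frob (gam k) (step k).
  by rewrite ler_wpM2l ?rho_ge0 ?frob_gam_step_ge.
have := frob_gam_stepE k; rewrite frob_ts_stepE lagrS.
have : 0 <= rho * frob (step k) (step k) by rewrite mulr_ge0 ?rho_ge0 ?frob_ge0.
lra.
Qed.

Lemma step_cvg0 : (fun k => frob (step k) (step k)) @ \oo --> 0.
Proof.
have rho30_gt0 : 0 < rho / 30 by rewrite divr_gt0.
exact: decrease_gap_cvg0 rho30_gt0 (fun k => frob_ge0 _) lagr_descent lagr_bounded_below.
Qed.

Lemma frob_resS_le k : frob (res k.+1) (res k.+1) <= frob (step k) (step k) / 100.
Proof.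
rewrite resS frobNl frobNr opprK frobZl frobZr mulrA -expr2.
apply: le_trans (ler_wpM2l (sqr_ge0 _) (frob_mulmx_le C_sym _)) _.
have /andP[x_ge0 x_le] := inf_norm_div_rho.
have : (rho^-1 * c) ^+ 2 <= 1 / 100 by nra.
by have := frob_ge0 (step k); rewrite exprMn mulrA; nra.
Qed.

Lemma res_cvg0 : (fun k => frob (res k) (res k)) @ \oo --> 0.
Proof.
rewrite -(cvg_shiftS (fun k => frob (res k) (res k))) /=.
have : (fun k => frob (step k) (step k) / 100) @ \oo --> (0 / 100 : R).
  exact: cvgM step_cvg0 (cvg_cst _).
rewrite mul0r; apply: (squeeze_cvgr _ (cvg_cst 0)).
by near=> k; rewrite frob_ge0 frob_resS_le.
Unshelve. all: by end_near.
Qed.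

Lemma cluster_gam_cvg (phi : nat -> nat) (L : 'M[R]_(n, r)) :
  {homo phi : a b / (a < b)%N} -> (ts \o phi) @ \oo --> L ->
  (fun k => ts (phi k).+1) @ \oo --> L /\
  (fun k => gam (phi k)) @ \oo --> L - rho^-1 *: (C *m L + C *m L).
Proof.
move=> phi_incr tsL.
have stepL := cvg_subseq phi_incr (frob_norm_cvg0 step_cvg0).
have resL := cvg_subseq phi_incr (frob_norm_cvg0 res_cvg0).
have sL : (fun k => s (phi k)) @ \oo --> L.
  have -> : (fun k => s (phi k)) = (fun k => ts (phi k) + res (phi k)).
    by apply/funext => k; rewrite /res addrC subrK.
  by rewrite -[L]addr0; apply: cvgD.
split.
  have -> : (fun k => ts (phi k).+1) = (fun k => step (phi k) + ts (phi k)).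
    by apply/funext => k; rewrite /step subrK.
  by rewrite -[L]add0r; apply: cvgD.
under eq_cvg do rewrite /gammaBM yE.
apply: (cvgB sL); apply: (cvgZ (cvg_cst _)).
by apply: cvgD; [exact: (cvg_mulmx (cvg_cst _) tsL) | exact: (cvg_mulmx (cvg_cst _) sL)].
Qed.

Lemma row_gam_frob k i :
  row i (gam k) = frob (row i (gam k)) (row i (ts k.+1)) *: row i (ts k.+1).
Proof. by rewrite [in frob _ _]row_gam frobZl frob_row_ts mulr1 -row_gam. Qed.

Lemma cluster_row_collinear (phi : nat -> nat) (L : 'M[R]_(n, r)) :
  {homo phi : a b / (a < b)%N} -> (ts \o phi) @ \oo --> L ->
  forall i, exists t : R, - row i (C *m L) = t *: row i L.
Proof.
move=> phi_incr tsL i; have [tsSL gamL] := cluster_gam_cvg phi_incr tsL.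
have rowL := cvg_row (i := i) tsSL; have rowG := cvg_row (i := i) gamL.
have : (fun k => row i (gam (phi k))) @ \oo -->
    frob (row i (L - rho^-1 *: (C *m L + C *m L))) (row i L) *: row i L.
  by under eq_cvg do rewrite row_gam_frob; exact: cvgZ (cvg_frob rowG rowL) rowL.
move/(cvg_unique (@norm_hausdorff R _) rowG); set a := frob _ _ => rowGL.
exists (rho / 2 * (a - 1)); apply/rowP => j; move: (C *m L) rowGL => CL rowGL.
have := congr1 (fun v : 'rV[R]_r => v 0 j) rowGL; rewrite !mxE /= => GLj.
have -> : CL i j = rho / 2 * (rho^-1 * (CL i j + CL i j)) by field; rewrite gt_eqF.
have -> : rho^-1 * (CL i j + CL i j) = L i j - a * L i j by rewrite -GLj; ring.
ring.
Qed.

End PositivePenalty.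

Lemma lagr_cvgn : cvgn lagr.
Proof.
have [rho_gt0|/rho_le0_degenerate [rho0 C0]] := ltrP 0 rho.
  have rho30_gt0 : 0 < rho / 30 by rewrite divr_gt0.
  exact: decrease_cvgn rho30_gt0 (fun k => frob_ge0 _) (lagr_descent rho_gt0) lagr_bounded_below.
suff -> : lagr = fun=> 0 by exact: is_cvg_cst.
by apply/funext => k; rewrite /lagr rho0 C0 mul0mx frob0l !mul0r addr0.
Qed.

Lemma Lrho_sub_frobE k :
  (Lrho C rho (ts k) (s k) (y k) - (frob (C *m ts k) (ts k))%:E)%E =
  (rho / 2 * frob (res k) (res k))%:E.
Proof. by rewrite LrhoE -EFinB /lagr addrC addKr. Qed.

Lemma rho_res_cvg0 : (fun k => rho / 2 * frob (res k) (res k)) @ \oo --> 0.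
Proof.
have [rho_gt0|/rho_le0_degenerate [rho0 _]] := ltrP 0 rho.
  by rewrite -(mulr0 (rho / 2)); apply: cvgM (cvg_cst _) (res_cvg0 rho_gt0).
by rewrite rho0; under eq_cvg do rewrite !mul0r; exact: cvg_cst.
Qed.

Lemma cluster_stationary (phi : nat -> nat) (L : 'M[R]_(n, r)) :
  {homo phi : a b / (a < b)%N} -> (ts \o phi) @ \oo --> L -> stationary C L.
Proof.
move=> phi_incr tsL; split=> [|i].
  apply/obliqueP => i; have := cvg_frob (cvg_row (i := i) tsL) (cvg_row (i := i) tsL).
  rewrite (_ : (fun k => _) = fun=> 1); last by apply/funext => k; rewrite /= frob_row_ts.
  by move=> /(cvg_unique (@Rhausdorff R) (cvg_cst (1 : R))) ->.
rewrite /sphere_subdiff /=; have [rho_gt0|/rho_le0_degenerate [_ C0]] := ltrP 0 rho.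
  by have [t eq_t] := cluster_row_collinear rho_gt0 phi_incr tsL i; exists t.
by exists 0; rewrite C0 mul0mx row0 oppr0 scale0r.
Qed.

End ADMM.

Theorem theorem1 (R : realType) (n r : nat) (C : 'M[R]_n) (rho : R)
  (ts s y : nat -> 'M[R]_(n, r)) :
  (0 < n)%N -> (0 < r)%N -> C^T = C ->
  Num.max (10 * inf_norm C) (2 * spec_norm C) <= rho ->
  admm_bm C rho ts s y ->
  assumptionA C rho s y ->
  [/\ exists l : R,
        (fun k : nat => Lrho C rho (ts k.+1) (s k.+1) (y k.+1)) @ \oo --> l%:E,
      (fun k : nat => (Lrho C rho (ts k) (s k) (y k) - (frob (C *m ts k) (ts k))%:E)%E)
        @ \oo --> 0%E,
      exists phi : nat -> nat,
        {homo phi : a b / (a < b)%N >-> (a < b)%N} /\ cvg ((ts \o phi) @ \oo) &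
      forall (phi : nat -> nat) (L : 'M[R]_(n, r)),
        {homo phi : a b / (a < b)%N >-> (a < b)%N} ->
        (ts \o phi) @ \oo --> L -> stationary C L].
Proof.
move=> _ _ C_sym rho_max admm gamma_neq0.
have rho_ge : 10 * inf_norm C <= rho by move: rho_max; rewrite ge_max => /andP[].
split.
- exists (limn (lagr C rho ts s)).
  under eq_cvg do rewrite (LrhoE C_sym rho_ge admm gamma_neq0).
  apply: cvg_EFin; first exact: nearW.
  by rewrite (cvg_shiftS (lagr C rho ts s)); exact: lagr_cvgn C_sym rho_ge admm gamma_neq0.
- under eq_cvg do rewrite (Lrho_sub_frobE C_sym rho_ge admm gamma_neq0).
  apply: cvg_EFin; first exact: nearW.
  exact: rho_res_cvg0 C_sym rho_ge admm gamma_neq0.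
- exact: mx_bolzano_weierstrass (ts_entry_bound admm gamma_neq0).
- exact: cluster_stationary C_sym rho_ge admm gamma_neq0.
Qed.
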